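(* Let $\mathbf X$ be a $d$-dimensional continuous random vector with identical marginals. If $\mathbf X\in\mathrm{IC}^d$, then its correlation matrix coincides with its tail-dependence matrix, and also with its $\kappa_g$-matrix for every $g$ admissible for the standard uniform distribution.
   Context: For non-degenerate finite-variance $X,Y$, $(X,Y)$ has invariant correlation $r$ if $\mathrm{Corr}(X,Y)=\mathrm{Corr}(g(X),g(Y))=r$ for every measurable $g$ with $g(X),g(Y)$ non-degenerate of finite variance; $\mathbf X\in\mathrm{IC}^d$ means there is a matrix $R=(r_{ij})$ with $(X_i,X_j)$ having invariant correlation $r_{ij}$ for all $i,j$. For continuous $(X_i,X_j)$ with marginals $F_i,F_j$, the lower tail-dependence coefficient is $\lambda_{ij}=\lim_{u\downarrow0}\mathbb P(F_i(X_i)\le u,F_j(X_j)\le u)/u$; the tail-dependence matrix is $(\lambda_{ij})$. For $g:\mathbb R\to\mathbb R$, $\kappa_g(X_i,X_j)=\mathrm{Corr}(g(F_i(X_i)),g(F_j(X_j)))$ and the $\kappa_g$-matrix is $(\kappa_g(X_i,X_j))_{d\times d}$. $g$ is admissible for the standard uniform distribution if it is measurable and $g(U)$ is non-degenerate with finite variance for $U$ standard uniform. *)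

From HB Require Import structures.
From mathcomp Require Import all_boot all_order all_algebra.
From mathcomp Require Import all_classical all_reals all_analysis.
Set Implicit Arguments. Unset Strict Implicit. Unset Printing Implicit Defensive.
Import Order.TTheory GRing.Theory Num.Theory.
Import numFieldNormedType.Exports.
Local Open Scope classical_set_scope.
Local Open Scope ring_scope.

Section defs.
Context {d0 : measure_display} {T : measurableType d0} {R : realType}.
Variable P : probability T R.

Definition nondegenerate (X : T -> R) : Prop :=
  forall c : R, P [set t | X t = c] != 1%E.

Definition nondeg_L2 (X : T -> R) : Prop :=
  X \in Lfun P 2%:E /\ nondegenerate X.

Definition corr (X Y : T -> R) : R :=
  fine (covariance P X Y) / Num.sqrt (fine 'V_P[X] * fine 'V_P[Y]).

Definition inv_corr (X Y : T -> R) (r : R) : Prop :=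
  nondeg_L2 X /\ nondeg_L2 Y /\ corr X Y = r /\
  forall g : R -> R, measurable_fun setT g ->
    nondeg_L2 (g \o X) -> nondeg_L2 (g \o Y) -> corr (g \o X) (g \o Y) = r.

Definition IC (n : nat) (X : 'I_n -> T -> R) : Prop :=
  exists Rm : 'M[R]_n, forall i j, inv_corr (X i) (X j) (Rm i j).

Definition marg_cdf (X : {RV P >-> R}) (x : R) : R := fine (cdf X x).

End defs.

(* g is admissible for the standard uniform distribution: measurable, and
   g(U) non-degenerate with finite variance, U ~ Unif(0,1) being the identity
   random variable on (R, uniform_prob 0 1). *)
Definition admissible_unif (R : realType) (g : R -> R) : Prop :=
  measurable_fun setT g /\ nondeg_L2 (uniform_prob (@ltr01 R)) g.

From HB Require Import structures.
From mathcomp Require Import all_boot all_order all_algebra.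
From mathcomp Require Import all_classical all_reals all_analysis.
From mathcomp Require Import measurable_realfun ring lra.
Import Order.TTheory GRing.Theory Num.Theory.
Import numFieldNormedType.Exports.
Local Open Scope classical_set_scope.
Local Open Scope ring_scope.

(* Let F be the common marginal distribution function.  Being continuous, F
   attains every level u in (0,1), and {F(X_i) <= u} = {X_i <= x_u} for the
   largest x_u with F(x_u) = u; in particular F(X_i) is uniform on (0,1).
   Invariance of the correlation, applied to the indicator of (-oo, x_u],
   identifies r_ij with the correlation of two indicators of probability u,
   that is P(F(X_i) <= u, F(X_j) <= u) = u^2 + r_ij (u - u^2); dividing by u
   and letting u -> 0 gives lambda_ij = r_ij.  For admissible g, g(F(X_i)) has
   the law of g(U), so it is non-degenerate with finite variance, and
   invariance applied to g o F gives kappa_g(X_i, X_j) = r_ij. *)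

Section marg_cdf.
Context {d} {T : measurableType d} {R : realType} {P : probability T R}.
Variable X : {RV P >-> R}.
Local Notation F := (marg_cdf X).

Lemma marg_cdf_nondecreasing : {homo F : x y / x <= y}.
Proof.
by move=> x y xy; rewrite /marg_cdf fine_le ?fin_num_measure//
  cdf_nondecreasing.
Qed.

Lemma measurable_marg_cdf : measurable_fun setT F.
Proof. exact: nondecreasing_measurable marg_cdf_nondecreasing. Qed.

Hypothesis Fc : continuous F.

Lemma marg_cdf_quantile u : 0 < u < 1 ->
  exists x, F x = u /\ forall y, (F y <= u) = (y <= x).
Proof.
move=> /andP[u0 u1].
pose S := F @^-1` `]-oo, u].
have SE y : S y = (F y <= u) by rewrite /S /= in_itv.
have [y0 Fy0u] : exists y, F y < u.
  exact: filter_ex (cvgr_lt 0 (fine_cvg (cvg_cdfNy0 X)) u u0).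
have [y1 uFy1] : exists y, u < F y.
  exact: filter_ex (cvgr_gt 1 (fine_cvg (cvg_cdfy1 X)) u u1).
have S_ub : ubound S y1.
  move=> y; rewrite SE => Fyu; rewrite leNgt; apply/negP.
  by move=> /ltW/marg_cdf_nondecreasing/le_trans/(_ Fyu); rewrite leNgt uFy1.
have S0 : S !=set0 by exists y0; rewrite SE ltW.
have supS : has_sup S by split; last exists y1.
pose x := sup S.
have Sx : S x.
  apply: itv_closed_supremums => //.
    by apply: preimage_closed => [y _|]; [exact: Fc | exact: lray_closed].
  by split=> [|y]; [exact: sup_upper_bound | exact: ge_sup].
have uFx : u <= F x.
  rewrite leNgt; apply/negP => Fxu.
  have [z [xz Fzu]] : exists z, x < z /\ F z < u.
    apply: (filter_ex (F := x^'+)); near=> z; split.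
      by near: z; exact: nbhs_right_gt.
    by near: z; exact: cvgr_lt (cvg_at_right_filter (Fc x)) _ Fxu.
  have /(sup_upper_bound supS) : S z by rewrite SE ltW.
  by rewrite leNgt xz.
exists x; split; first by apply/eqP; rewrite eq_le uFx andbT -SE.
move=> y; apply/idP/idP => [Fyu|/marg_cdf_nondecreasing Fyx].
  by apply: sup_upper_bound; rewrite ?SE.
by rewrite (le_trans Fyx) -?SE.
Unshelve. all: by end_near.
Qed.

End marg_cdf.

Section indicator_correlation.
Context {d} {T : measurableType d} {R : realType} {P : probability T R}.

Lemma bounded_Lfun (f : T -> R) (M r : R) : 0 < r ->
  measurable_fun setT f -> (forall t, `|f t| <= M) -> f \in Lfun P r%:E.
Proof.
move=> r0 mf fM; rewrite inE/=; apply/andP; split; rewrite inE//=.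
rewrite /finite_norm unlock poweR_lty//.
apply: (@le_lt_trans _ _ (\int[P]_x (cst (M `^ r)%:E) x))%E; last first.
  by rewrite integral_cst//= probability_setT mule1 ltry.
apply: ge0_le_integral => //.
- by move=> t _; rewrite lee_fin powR_ge0.
- apply/measurable_EFinP.
  apply: (@measurableT_comp _ _ _ _ _ _ (@powR R ^~ r)) => //.
  exact: measurableT_comp.
- move=> t _; rewrite lee_fin /= ge0_ler_powR// ?nnegrE ?(ltW r0)//.
  exact: le_trans (normr_ge0 _) (fM t).
Qed.

Lemma indic_Lfun (A : set T) (r : R) : 0 < r -> measurable A ->
  (\1_A : T -> R) \in Lfun P r%:E.
Proof.
move=> r0 mA; apply: (bounded_Lfun _ 1 _ r0 (measurable_indic mA)) => t.
by rewrite indicE; case: (t \in A); rewrite ?normr1 ?normr0.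
Qed.

Lemma covariance_indic (A B : set T) : measurable A -> measurable B ->
  fine (covariance P (\1_A) (\1_B)) =
  fine (P (A `&` B)) - fine (P A) * fine (P B).
Proof.
move=> mA mB; have mAB := measurableI _ _ mA mB.
have indicM : (\1_A * \1_B)%R = \1_(A `&` B) :> (T -> R) by rewrite indicI.
rewrite covarianceE ?indic_Lfun// indicM ?indic_Lfun// !expectation_indic//.
by rewrite -[P (A `&` B)]fineK ?fin_num_measure// -[P A]fineK ?fin_num_measure//
  -[P B]fineK ?fin_num_measure.
Qed.

Lemma variance_indic (A : set T) : measurable A ->
  fine 'V_P[\1_A] = fine (P A) - fine (P A) ^+ 2.
Proof. by move=> mA; rewrite /variance covariance_indic// setIid expr2. Qed.

Lemma corr_indic (A B : set T) : measurable A -> measurable B ->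
  let a := fine (P A) in let b := fine (P B) in
  corr P (\1_A) (\1_B) =
  (fine (P (A `&` B)) - a * b) / Num.sqrt ((a - a ^+ 2) * (b - b ^+ 2)).
Proof. by move=> mA mB; rewrite /corr covariance_indic// !variance_indic. Qed.

Lemma nondeg_L2_indic (A : set T) : measurable A ->
  0 < fine (P A) < 1 -> nondeg_L2 P (\1_A : T -> R).
Proof.
move=> mA /andP[PA0 PA1]; split; first exact: indic_Lfun.
have PAE : P A = (fine (P A))%:E by rewrite fineK ?fin_num_measure.
move=> c; rewrite -[X in P X]/(\1_A @^-1` [set c]) preimage_indic !in_set1.
have R01 : (0 == 1 :> R) = false by rewrite eq_sym oner_eq0.
have [<-|c1] := eqVneq 1 c; first by rewrite R01 PAE eqe lt_eqF.
have [_|c0] := eqVneq 0 c; last by rewrite measure0 eqe R01.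
by rewrite probability_setC// PAE -EFinB eqe; apply/eqP; lra.
Qed.

Lemma inv_corr_preimage_setI {X Y : {RV P >-> R}} {r : R} {A : set R} {p : R} :
  measurable A -> inv_corr P X Y r ->
  fine (P (X @^-1` A)) = p -> fine (P (Y @^-1` A)) = p -> 0 < p < 1 ->
  fine (P (X @^-1` A `&` Y @^-1` A)) = p ^+ 2 + r * (p - p ^+ 2).
Proof.
move=> mA [_ [_ [_ icXY]]] PX PY p01.
have mXA : measurable (X @^-1` A) by exact: measurable_funPTI.
have mYA : measurable (Y @^-1` A) by exact: measurable_funPTI.
have indic_comp (Z : T -> R) : \1_A \o Z = \1_(Z @^-1` A) :> (T -> R).
  by apply/funext => t; rewrite /= !indicE.
have := icXY _ (measurable_indic mA).
rewrite !indic_comp => /(_ (nondeg_L2_indic _ mXA _) (nondeg_L2_indic _ mYA _)).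
rewrite corr_indic// PX PY -expr2 sqrtr_sqr => /(_ p01 p01).
have pp : 0 < p - p ^+ 2.
  by case/andP: p01 => p0 p1; rewrite subr_gt0 expr2 gtr_pMr.
by rewrite gtr0_norm// => <-; rewrite divfK ?gt_eqF//; ring.
Qed.

End indicator_correlation.

Lemma tail_dependence_inv_corr {d} {T : measurableType d} {R : realType}
    {P : probability T R} {X Y : {RV P >-> R}} {r : R} :
  continuous (marg_cdf X) -> marg_cdf Y = marg_cdf X -> inv_corr P X Y r ->
  (fun u => fine (P [set t | marg_cdf X (X t) <= u /\ marg_cdf Y (Y t) <= u]) / u)
    x @[x --> 0^'+] --> r.
Proof.
move=> Fc FYX icXY.
have lim_r : (fun u => u + r * (1 - u)) x @[x --> 0^'+] --> r.
  apply: cvg_at_right_filter.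
  have : (fun u => u + r * (1 - u)) x @[x --> 0] --> 0 + r * (1 - 0).
    apply: cvgD; first exact: cvg_id.
    by apply: cvgM; [exact: cvg_cst |
      apply: cvgB; [exact: cvg_cst | exact: cvg_id]].
  by rewrite add0r subr0 mulr1.
apply: cvg_trans lim_r; apply: near_eq_cvg; near=> u.
have u0 : 0 < u by near: u; exact: nbhs_right_gt.
have u1 : u < 1 by near: u; exact: nbhs_right_lt.
have [x [Fx Fle]] := marg_cdf_quantile X Fc u (andb_true_intro (conj u0 u1)).
have -> : [set t | marg_cdf X (X t) <= u /\ marg_cdf Y (Y t) <= u] =
    X @^-1` `]-oo, x] `&` Y @^-1` `]-oo, x].
  by apply/seteqP; split => t /=; rewrite FYX !in_itv /= !Fle.
have PXx : fine (P (X @^-1` `]-oo, x])) = u by rewrite -Fx.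
have PYx : fine (P (Y @^-1` `]-oo, x])) = u by rewrite -Fx -FYX.
rewrite (inv_corr_preimage_setI (measurable_itv _) icXY PXx PYx) ?u0 ?u1//=.
by field; rewrite gt_eqF.
Unshelve. all: by end_near.
Qed.

Section uniform_law.
Context {R : realType}.
Local Notation U := (uniform_prob (@ltr01 R)).
Implicit Types m : probability (measurableTypeR R) R.

Lemma uniform_prob_lray (u : R) : 0 < u < 1 -> U `]-oo, u]%classic = u%:E.
Proof.
case/andP => u0 u1.
rewrite /uniform_prob integral_uniform_pdf.
have -> : `]-oo, u]%classic `&` `[0, 1]%classic = `[0, u]%classic :> set R.
  apply/seteqP; split => x /=; rewrite !in_itv /=.
    by case=> xu /andP[-> _].
  by case/andP => -> xu; rewrite xu (ltW (le_lt_trans xu u1)).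
rewrite (eq_integral (fun _ => 1%:E)); last first.
  move=> x; rewrite inE /= in_itv /= => /andP[x0 xu].
  by rewrite /uniform_pdf x0 (ltW (le_lt_trans xu u1)) subr0 invr1.
by rewrite integral_cst//= mul1e lebesgue_measure_itv /= lte_fin u0 sube0.
Qed.

Lemma le_measure_lray m (x y : R) :
  x <= y -> (m `]-oo, x]%classic <= m `]-oo, y]%classic)%E.
Proof. by move=> xy; rewrite le_measure ?inE//; exact: subitvPr. Qed.

Section lray_unit_interval.
Variable m : probability (measurableTypeR R) R.
Hypothesis mE : forall e, 0 < e < 1 -> m `]-oo, e]%classic = e%:E.

Lemma lray_unit_interval_le0 u : u <= 0 -> m `]-oo, u]%classic = 0%E.
Proof.
move=> u0; apply/eqP; rewrite eq_le measure_ge0 andbT.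
apply/lee_addgt0Pr => e e0; rewrite add0e.
have [e1|e1] := ltP e 1.
  by rewrite -mE ?e0 ?e1// le_measure_lray// (le_trans u0) ?ltW.
by rewrite (le_trans (probability_le1 _ _)) ?lee_fin.
Qed.

Lemma lray_unit_interval_ge1 u : 1 <= u -> m `]-oo, u]%classic = 1%E.
Proof.
move=> u1; apply/eqP; rewrite eq_le probability_le1//=.
apply/lee_addgt0Pr => e e0.
have [e1|e1] := ltP e 1; last by rewrite (le_trans _ (leeDr _ _)) ?lee_fin.
have e01 : 0 < 1 - e < 1 by apply/andP; split; lra.
have -> : 1%E = ((1 - e)%:E + e%:E)%E by rewrite -EFinD subrK.
rewrite leeD2r// -mE// le_measure_lray//.
by rewrite (le_trans _ u1)// lerBlDr lerDl ltW.
Qed.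

End lray_unit_interval.

Lemma probability_eq_lray m1 m2 :
  (forall u, m1 `]-oo, u]%classic = m2 `]-oo, u]%classic) ->
  forall A, measurable A -> m1 A = m2 A.
Proof.
move=> m12.
have ocitvE m (a b : R) : a < b ->
    m `]a, b]%classic = (m `]-oo, b]%classic - m `]-oo, a]%classic)%E.
  move=> ab; have -> : `]a, b]%classic = `]-oo, b] `\` `]-oo, a] :> set R.
    by rewrite -[RHS]setCK setCD setCitvl setUC -[LHS]setCK setCitv.
  rewrite measureD ?setIidr//.
    by apply: subset_itvl; rewrite bnd_simp ltW.
  by rewrite (le_lt_trans (probability_le1 _ _)) ?ltry.
move=> A mA.
apply: (@measure_unique _ R (measurableTypeR R) (@ocitv R)
  (fun k : nat => `]-k%:R, k%:R]%classic) erefl (@ocitvI R)) => //.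
- by move=> k; exists (-k%:R, k%:R).
- apply/seteqP; split => // x _; exists (Num.truncn `|x|).+1 => //=.
  move: (truncnS_gt `|x|) => /ltr_normlP -[xl xr].
  by rewrite in_itv /= -ltrNl xl ltW.
- move=> _ [[a b] _ <-] /=.
  have [ab|ba] := ltP a b; first by rewrite !ocitvE// !m12.
  by rewrite set_itv_ge ?measure0// bnd_simp -leNgt.
- by move=> k; rewrite (le_lt_trans (probability_le1 _ _)) ?ltry.
Qed.

Lemma uniform_prob_unique m :
  (forall u, 0 < u < 1 -> m `]-oo, u]%classic = u%:E) ->
  forall A, measurable A -> m A = U A.
Proof.
move=> mE; apply: probability_eq_lray => u.
have UE := @uniform_prob_lray.
have [u0|u0] := leP u 0.
  by rewrite (lray_unit_interval_le0 _ mE) ?(lray_unit_interval_le0 _ UE).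
have [u1|u1] := leP 1 u.
  by rewrite (lray_unit_interval_ge1 _ mE) ?(lray_unit_interval_ge1 _ UE).
have u01 : 0 < u < 1 by rewrite u0 u1.
by rewrite mE //; exact/esym/UE.
Qed.

End uniform_law.

Section probability_integral_transform.
Context {d} {T : measurableType d} {R : realType} {P : probability T R}.
Variable X : {RV P >-> R}.

Lemma measurable_marg_cdf_transform :
  measurable_fun setT (marg_cdf X \o X : T -> measurableTypeR R).
Proof. exact: measurableT_comp (measurable_marg_cdf X) _. Qed.

(* F o X with codomain [measurableTypeR R], the measurable space on which
   [uniform_prob] lives, so that its law can be compared with it. *)
Definition marg_cdf_transform : {RV P >-> measurableTypeR R} :=
  HB.pack_for {mfun T >-> measurableTypeR R} (marg_cdf X \o X)
    (isMeasurableFun.Build _ _ _ _ _ measurable_marg_cdf_transform).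

Lemma distribution_marg_cdf_transform : continuous (marg_cdf X) ->
  forall A, measurable A ->
  distribution P marg_cdf_transform A = uniform_prob (@ltr01 R) A.
Proof.
move=> Fc; apply: uniform_prob_unique => u u01.
have [x [Fx Fle]] := marg_cdf_quantile X Fc u u01.
rewrite -[LHS]/(P (marg_cdf_transform @^-1` `]-oo, u])).
have -> : marg_cdf_transform @^-1` `]-oo, u] = X @^-1` `]-oo, x].
  by apply/seteqP; split => t /=; rewrite !in_itv /= Fle.
rewrite -Fx /marg_cdf /cdf /distribution /pushforward fineK// fin_num_measure//.
exact: measurable_funPTI.
Qed.

End probability_integral_transform.

Lemma nondeg_L2_comp {d d'} {T : measurableType d} {T' : measurableType d'}
    {R : realType} {P : probability T R} {Q : probability T' R}
    {Y : {RV P >-> T'}} {g : T' -> R} :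
  (forall A, measurable A -> distribution P Y A = Q A) ->
  nondeg_L2 Q g -> nondeg_L2 P (g \o Y).
Proof.
move=> PYQ [Lg ndg].
have mg : measurable_fun setT g.
  by move: Lg; rewrite inE => /andP[]; rewrite inE.
split; last first.
  move=> c; have mgc : measurable (g @^-1` [set c]).
    by rewrite -[X in measurable X]setTI; exact: mg.
  by move: (ndg c); rewrite -PYQ.
rewrite inE; apply/andP; split; first by rewrite inE; exact: measurableT_comp.
move: Lg; rewrite !inE => /andP[_]; rewrite /finite_norm unlock /=.
pose f y := (`|(g y)%:E| `^ 2)%E.
have mf : measurable_fun setT f.
  rewrite /f; under eq_fun do rewrite abse_EFin poweR_EFin.
  apply/measurable_EFinP.
  apply: (@measurableT_comp _ _ _ _ _ _ (@powR R ^~ 2)) => //.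
  exact: measurableT_comp.
have f0 y : (0 <= f y)%E by exact: poweR_ge0.
rewrite -[X in _ -> (X `^ _ < _)%E](ge0_integral_distribution _ mf f0).
rewrite (eq_measure_integral Q) => [|A mA _]; last exact: PYQ.
by rewrite inE /finite_norm unlock.
Qed.

Theorem proposition10 (d0 : measure_display) (T : measurableType d0)
  (R : realType) (P : probability T R) (d : nat) (X : 'I_d -> {RV P >-> R}) :
  (* continuous random vector: continuous marginal distribution functions *)
  (forall i, continuous (marg_cdf (X i))) ->
  (* identical marginals *)
  (forall i j, distribution P (X i) = distribution P (X j)) ->
  IC P (fun i => (X i : T -> R)) ->
  (* correlation matrix = tail-dependence matrix *)
  (forall i j,
     (fun u => fine (P [set t | marg_cdf (X i) (X i t) <= u /\
                                marg_cdf (X j) (X j t) <= u]) / u)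
       x @[x --> 0^'+] --> corr P (X i) (X j)) /\
  (* correlation matrix = kappa_g-matrix for every admissible g *)
  (forall g : R -> R, admissible_unif g -> forall i j,
     corr P (g \o marg_cdf (X i) \o X i) (g \o marg_cdf (X j) \o X j)
     = corr P (X i) (X j)).
Proof.
move=> Fc Fid [Rm icX].
have Feq i j : marg_cdf (X j) = marg_cdf (X i).
  by apply/funext => x; rewrite /marg_cdf /cdf (Fid j i).
have corrE i j : corr P (X i) (X j) = Rm i j by case: (icX i j) => _ [_ [-> _]].
split=> [i j|g [mg ndg] i j]; rewrite corrE.
  exact: tail_dependence_inv_corr (Fc i) (Feq i j) (icX i j).
have [_ [_ [_ icg]]] := icX i j.
have ndgF k : nondeg_L2 P (g \o marg_cdf (X k) \o X k).
  exact: nondeg_L2_comp (distribution_marg_cdf_transform (X k) (Fc k)) ndg.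
rewrite (Feq i j) icg //.
  exact: measurableT_comp mg (measurable_marg_cdf _).
by rewrite -(Feq i j).
Qed.
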